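(* Let $T=(V,E)$ be a simple graph and let $S=(U,F)$ be a subgraph of $T$ which is a tree. Suppose $T'=(V',E')$ is formed from $T$ by a $1$-dimensional $|F|$-extension which deletes exactly the edges in $F$ and appends a new vertex $v$ incident to $|F|+1$ new edges. Then $T$ is a tree if and only if $T'$ is a tree.
   Context: All graphs are finite and loop-free; multi-graphs may have parallel edges. For a multi-graph $G$ and integers $d\ge 1$, $j\ge 0$, a $d$-dimensional $j$-extension of $G$ forms a new multi-graph $G'$ by deleting a set $F$ of $j$ edges of $G$ and then adding a new vertex $v$ together with $d+j$ new edges joining $v$ to vertices of $G$ (parallel new edges are allowed), in such a way that every endpoint of an edge of $F$ is a neighbour of $v$ in $G'$. (For $d=1$ arbitrary $j\ge 0$ is allowed.) *)

(* Multigraphs given by an edge type E with endpoint maps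
   src dst : E -> V (unordered: direction is irrelevant everywhere below);
   a (sub)graph is given by a vertex set W and an edge set D. *)
From HB Require Import structures.
From mathcomp Require Import all_boot.
Set Implicit Arguments. Unset Strict Implicit.
Unset Printing Implicit Defensive.

Section MGraph.
Variables (V E : finType) (src dst : E -> V).

Definition joins (e : E) (x y : V) : bool :=
  ((src e == x) && (dst e == y)) || ((src e == y) && (dst e == x)).

Definition adj_in (W : {set V}) (D : {set E}) : rel V :=
  fun x y => [&& x \in W, y \in W & [exists e in D, joins e x y]].

Definition connected_in (W : {set V}) (D : {set E}) : Prop :=
  forall x y, x \in W -> y \in W -> connect (adj_in W D) x y.

Definition has_cycle_in (W : {set V}) (D : {set E}) : Prop :=
  exists k (xs : 'I_k.+1 -> V) (es : 'I_k.+1 -> E),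
    [/\ injective xs, injective es,
        (forall i, xs i \in W), (forall i, es i \in D) &
        (forall i, joins (es i) (xs i) (xs (ordS i)))].

Definition is_tree (W : {set V}) (D : {set E}) : Prop :=
  [/\ W != set0, (forall e, e \in D -> src e \in W /\ dst e \in W),
      connected_in W D & ~ has_cycle_in W D].

Definition simple_graph : Prop :=
  (forall e, src e != dst e) /\
  (forall e1 e2, joins e1 (src e2) (dst e2) -> e1 = e2).

End MGraph.

(* The 1-dimensional |F|-extension: vertices option V (new vertex = None),
   edges E + 'I_(#|F|).+1, with the edges of F deleted; the new edge inr i
   joins None and Some (nbr i). *)
Section Ext.
Variables (V E : finType).

Definition ext_src (src : E -> V) (F : {set E}) (nbr : 'I_(#|F|).+1 -> V) (x : E + 'I_(#|F|).+1) : option V :=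
  match x with inl e => Some (src e) | inr _ => None end.
Definition ext_dst (dst : E -> V) (F : {set E}) (nbr : 'I_(#|F|).+1 -> V) (x : E + 'I_(#|F|).+1) : option V :=
  match x with inl e => Some (dst e) | inr i => Some (nbr i) end.
Definition ext_edges (F : {set E}) : {set E + 'I_(#|F|).+1} :=
  [set x | match x with inl e => e \notin F | inr _ => true end].
End Ext.
Arguments ext_src [V E] src F nbr _.
Arguments ext_dst [V E] dst F nbr _.

(* A finite graph is a tree iff it is connected and has one edge fewer than
   vertices.  The extension adds one vertex and #|F|.+1 - #|F| = 1 edge, so it
   remains to compare connectivity.  An edge of F deleted from T is replaced in
   T' by a path through the new vertex; conversely, collapsing the new vertex
   onto one of its neighbours maps walks of T' to walks of T, because these
   neighbours lie in the connected tree S: each of the #|F|.+1 vertices of S is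
   an end of an edge of F, hence one of the at most #|F|.+1 neighbours. *)

From mathcomp Require Import all_boot zify.
Set Implicit Arguments. Unset Strict Implicit. Unset Printing Implicit Defensive.

Section MultiGraph.
Variables (V E : finType) (src dst : E -> V).
Implicit Types (W : {set V}) (D : {set E}).

Definition edges_within (W : {set V}) (D : {set E}) : Prop :=
  forall e, e \in D -> src e \in W /\ dst e \in W.

Lemma joins_sym e x y : joins src dst e x y = joins src dst e y x.
Proof. by rewrite /joins orbC. Qed.

Lemma joins_ends e : joins src dst e (src e) (dst e).
Proof. by rewrite /joins !eqxx. Qed.

Lemma joins_inv e a b c d :
  joins src dst e a b -> joins src dst e c d ->
  (a = c /\ b = d) \/ (a = d /\ b = c).
Proof.
by rewrite /joins => /orP[]/andP[/eqP<- /eqP<-] /orP[]/andP[/eqP<- /eqP<-]; tauto.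
Qed.

Lemma adj_in_sym W D : symmetric (adj_in src dst W D).
Proof.
move=> x y; apply/and3P/and3P => -[? ? /existsP[e /andP[eD j]]].
  by split=> //; apply/existsP; exists e; rewrite eD joins_sym.
by split=> //; apply/existsP; exists e; rewrite eD joins_sym.
Qed.

Lemma connect_adj_in_sym W D : connect_sym (adj_in src dst W D).
Proof. exact/sym_connect_sym/adj_in_sym. Qed.

Lemma adj_in_edge W D e x y :
  x \in W -> y \in W -> e \in D -> joins src dst e x y -> adj_in src dst W D x y.
Proof.
by move=> xW yW eD j; rewrite /adj_in xW yW; apply/existsP; exists e; rewrite eD.
Qed.

Lemma connect_adj_in_sub W1 W2 D1 D2 :
  W1 \subset W2 -> D1 \subset D2 ->
  subrel (connect (adj_in src dst W1 D1)) (connect (adj_in src dst W2 D2)).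
Proof.
move=> /subsetP sW /subsetP sD; apply: connect_sub => x y.
case/and3P=> xW yW /existsP[e /andP[eD j]].
by apply/connect1/(adj_in_edge (sW _ xW) (sW _ yW) (sD _ eD)).
Qed.

Lemma has_cycle_in_sub W1 W2 D1 D2 :
  W1 \subset W2 -> D1 \subset D2 ->
  has_cycle_in src dst W1 D1 -> has_cycle_in src dst W2 D2.
Proof.
move=> /subsetP sW /subsetP sD [k [xs [es [? ? xW eD ?]]]].
by exists k, xs, es; split=> // i; [apply: sW | apply: sD].
Qed.

Lemma path_adj_in_edges W D (e0 : E) a s :
  path (adj_in src dst W D) a s ->
  exists es : nat -> E, forall i, i < size s ->
    es i \in D /\ joins src dst (es i) (nth a (a :: s) i) (nth a (a :: s) i.+1).
Proof.
elim: s a => [|y s IH] a /=; first by exists (fun=> e0).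
case/andP=> /and3P[_ _ /existsP[f /andP[fD fj]]] /IH[es esP].
exists (fun i => if i is i'.+1 then es i' else f) => -[|i] //= lt.
rewrite !(set_nth_default y a) //=; last exact: ltnW.
exact: esP i lt.
Qed.

Lemma path_adj_in_within W D a s : path (adj_in src dst W D) a s -> {subset s <= W}.
Proof.
elim: s a => [|y s IH] a //= /andP[/and3P[_ yW _] /IH sW] x.
by rewrite inE => /predU1P[->|/sW].
Qed.

Lemma has_cycle_in_connect_setD1 W D e a b :
  e \in D -> joins src dst e a b -> a \in W ->
  connect (adj_in src dst W (D :\ e)) a b -> has_cycle_in src dst W D.
Proof.
move=> eD eab aW /connectP[p0 p0P b_last]; move: eab; rewrite {b}b_last.
case: (shortenP p0P) => s sP s_uniq _ {p0 p0P} eab.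
have [es esP] := path_adj_in_edges e sP.
have sW := path_adj_in_within sP.
pose xs (i : 'I_(size s).+1) := nth a (a :: s) i.
pose es' (i : 'I_(size s).+1) := if i < size s then es i else e.
have xs_inj : injective xs.
  by move=> i j /eqP; rewrite nth_uniq ?size_cons // => /eqP/val_inj.
have es'D (i : 'I_(size s).+1) : i < size s -> es' i \in D :\ e.
  by move=> lt; rewrite /es' lt; exact: (esP i lt).1.
have es'_last (i : 'I_(size s).+1) : size s <= i -> es' i = e.
  by rewrite /es' leqNgt => /negPf->.
have i_last (i : 'I_(size s).+1) : size s <= i -> i = size s :> nat.
  by move=> ge; apply/eqP; rewrite eqn_leq ge -ltnS ltn_ord.
have nthK k l : k <= size s -> l <= size s ->
    nth a (a :: s) k = nth a (a :: s) l -> k = l.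
  by move=> lk ll /eqP; rewrite nth_uniq // => /eqP.
exists (size s), xs, es'; split.
- exact: xs_inj.
- move=> i j eij.
  case: (ltnP i (size s)) => lti; case: (ltnP j (size s)) => ltj.
  + have [_ ji] := esP i lti; have [_ jj] := esP j ltj.
    move: eij; rewrite /es' /= lti ltj => eij; rewrite eij in ji.
    case: (joins_inv ji jj) => [[/nthK h _]|[/nthK h1 /nthK h2]].
      by apply/val_inj/h; exact: ltnW.
    by exfalso; have := h1 (ltnW lti) ltj; have := h2 lti (ltnW ltj); lia.
  + by move: (es'D i lti); rewrite eij es'_last // setD11.
  + by move: (es'D j ltj); rewrite -eij es'_last // setD11.
  + by apply/val_inj; rewrite /= (i_last i lti) (i_last j ltj).
- by case=> -[|i] //= lt; apply/sW/mem_nth.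
- by move=> i; case: (ltnP i (size s)) => [/es'D/setD1P[]|/es'_last->].
- move=> i; case: (ltnP i (size s)) => [lti|gei].
    by rewrite /es' lti /xs /= modn_small //; case: (esP i lti).
  by rewrite (es'_last i gei) /xs /= i_last // modnn /= -last_nth joins_sym.
Qed.

Lemma val_iter_ordS n (i : 'I_n) m : val (iter m (@ordS n) i) = (i + m) %% n.
Proof.
elim: m => [|m IH]; first by rewrite addn0 modn_small.
by rewrite iterS /= IH -addn1 modnDml addn1 addnS.
Qed.

Lemma connected_in_setD1_cycle W D :
  connected_in src dst W D -> has_cycle_in src dst W D ->
  exists2 e, e \in D & connected_in src dst W (D :\ e).
Proof.
move=> conn [k [xs [es [_ es_inj xW eD hj]]]]; exists (es ord0) => //.
set A := adj_in src dst W (D :\ es ord0).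
have walk n :
    n <= k -> connect A (xs (ordS ord0)) (xs (iter n (@ordS k.+1) (ordS ord0))).
  elim: n => [|n IH] lt_nk; first exact: connect0.
  apply: connect_trans (IH (ltnW lt_nk)) (connect1 _); rewrite iterS.
  apply: (adj_in_edge (xW _) (xW _) _ (hj _)); rewrite !inE eD andbT.
  rewrite (inj_eq es_inj) -val_eqE val_iter_ordS /= modnDml add1n.
  by rewrite modn_small ?ltnS // ltnW.
have back : connect A (xs (ordS ord0)) (xs ord0).
  have := walk k (leqnn k); congr (connect _ _ (xs _)).
  by apply/val_inj; rewrite val_iter_ordS /= modnDml add1n modnn.
move=> x0 y0 x0W y0W; apply: connect_sub _ _ _ (conn x0 y0 x0W y0W) => x y.
case/and3P=> xW' yW' /existsP[f /andP[fD fj]].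
have [f_e|f_ne] := eqVneq f (es ord0).
  subst f; case: (joins_inv fj (hj ord0)) => -[-> ->]; last exact: back.
  by rewrite connect_adj_in_sym.
by apply/connect1/(adj_in_edge xW' yW' _ fj); rewrite !inE f_ne.
Qed.

Lemma connected_in_descent W D r :
  r \in W -> connected_in src dst W D ->
  exists d : V -> nat, forall x, x \in W -> x != r ->
    exists2 e, e \in D & [exists y, joins src dst e y x && (d y < d x)].
Proof.
move=> rW conn; set A := adj_in src dst W D.
pose P x n := (x \notin W) || [exists t : n.-tuple V, path A r t && (last r t == x)].
have P_tuple x (t : seq V) : path A r t -> last r t = x -> P x (size t).
  move=> tP tx; apply/orP; right; apply/existsP.
  by exists (in_tuple t); rewrite /= tP tx eqxx.
have P_ex x : exists n, P x n.
  have [xW|] := boolP (x \in W); last by exists 0; apply/orP; left.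
  by have /connectP[t tP tx] := conn r x rW xW; exists (size t); apply: P_tuple.
pose d x := ex_minn (P_ex x).
have d_min x n : P x n -> d x <= n by rewrite /d; case: ex_minnP => m _; apply.
have dP x : P x (d x) by rewrite /d; case: ex_minnP.
exists d => x xW xr; have := dP x; rewrite /P xW /=.
case/existsP=> -[t /= /eqP t_size] /andP[tP /eqP tx].
case/lastP: t t_size tP tx => [|t z] t_size.
  by move=> _ /= rx; rewrite rx eqxx in xr.
rewrite rcons_path last_rcons => /andP[tP /and3P[_ _ /existsP[e /andP[eD ej]]]] zx.
exists e => //; apply/existsP; exists (last r t); rewrite -zx ej /= zx.
by rewrite -t_size size_rcons ltnS; apply/d_min/P_tuple.
Qed.

Lemma card_connected_in W D r :
  r \in W -> connected_in src dst W D -> #|W| <= #|D|.+1.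
Proof.
move=> rW conn; have [d parent] := connected_in_descent rW conn.
pose p x := [pick e in D | [exists y, joins src dst e y x && (d y < d x)]].
have pP x : x \in W :\ r -> exists2 e, p x = Some e &
    (e \in D) && [exists y, joins src dst e y x && (d y < d x)].
  case/setD1P=> xr xW; rewrite /p; case: pickP => [e he|none]; first by exists e.
  by case: (parent x xW xr) => e eD he; move: (none e); rewrite eD he.
have p_inj : {in W :\ r &, injective p}.
  move=> x x' /pP[e -> /andP[_ /existsP[y /andP[ey lt]]]].
  move=> /pP[e' -> /andP[_ /existsP[y' /andP[ey' lt']]]] [ee']; subst e'.
  by case: (joins_inv ey ey') => -[yy' xx'] //; subst; rewrite ltnNge ltnW in lt'.
have : #|p @: (W :\ r)| <= #|Some @: D|.
  apply/subset_leq_card/subsetP => _ /imsetP[x /pP[e -> /andP[eD _]] ->].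
  exact: imset_f.
rewrite (card_in_imset p_inj) card_imset; last exact: Some_inj.
by rewrite (cardsD1 r W) rW.
Qed.

(* Deleting an edge e of an acyclic graph separates its ends, so the graph
   splits into the component C of src e and its complement; induct on both. *)
Lemma card_acyclic W D w :
  edges_within W D -> ~ has_cycle_in src dst W D -> w \in W -> #|D| < #|W|.
Proof.
have [n] := ubnP #|D|; elim: n W D w => // n IH W D w.
rewrite ltnS => leDn ends acyc wW.
have [->|[e eD]] := set_0Vmem D; first by rewrite cards0 (cardsD1 w W) wW.
set D' := D :\ e; set A := adj_in src dst W D'.
have D'D : D' \subset D := subsetDl D [set e].
have [aW bW] := ends e eD.
have /negP nab : ~~ connect A (src e) (dst e).
  by apply/negP => /(has_cycle_in_connect_setD1 eD (joins_ends e) aW).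
set C := [set x | connect A (src e) x]; set P := [set f | src f \in C].
have ends' f :
    f \in D' -> [/\ src f \in W, dst f \in W & (dst f \in C) = (src f \in C)].
  move=> fD'; have [sW dW] := ends f (subsetP D'D f fD'); split=> //.
  have f_adj := adj_in_edge sW dW fD' (joins_ends f).
  by rewrite !inE (same_connect1r (connect_adj_in_sym _ _) f_adj).
have cardD' : #|D| = #|D'|.+1 by rewrite (cardsD1 e D) eD.
have lt1 : #|D' :&: P| < #|W :&: C|.
  apply: (IH _ _ (src e)); last by rewrite inE aW inE connect0.
  - by apply: leq_ltn_trans (subset_leq_card (subsetIl _ _)) _; rewrite -ltnS -cardD'.
  - move=> f /setIP[/ends'[sW dW sd]]; rewrite inE => fC.
    by rewrite !in_setI sW dW sd fC.
  - apply: contra_not acyc; apply: has_cycle_in_sub; first exact: subsetIl.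
    exact: subset_trans (subsetIl _ _) D'D.
have lt2 : #|D' :\: P| < #|W :\: C|.
  apply: (IH _ _ (dst e)); last by rewrite !inE bW andbT; exact/negP.
  - by apply: leq_ltn_trans (subset_leq_card (subsetDl _ _)) _; rewrite -ltnS -cardD'.
  - move=> f /setDP[/ends'[sW dW sd]]; rewrite inE => /negPf fC.
    by rewrite !in_setD sW dW sd fC.
  - apply: contra_not acyc; apply: has_cycle_in_sub; first exact: subsetDl.
    exact: subset_trans (subsetDl _ _) D'D.
by rewrite cardD' -(cardsID P D') -(cardsID C W); lia.
Qed.

Lemma is_tree_card W D :
  W != set0 -> edges_within W D ->
  is_tree src dst W D <-> connected_in src dst W D /\ #|D|.+1 = #|W|.
Proof.
move=> /set0Pn[w wW] ends; split.
  case=> _ _ conn acyc; split=> //; apply/eqP.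
  by rewrite eqn_leq (card_acyclic ends acyc wW) (card_connected_in wW conn).
case=> conn cardW; split=> //; first by apply/set0Pn; exists w.
case/(connected_in_setD1_cycle conn)=> e eD conn'.
by have := card_connected_in wW conn'; rewrite -cardW (cardsD1 e D) eD ltnn.
Qed.

Lemma connected_in_incident W D x y :
  connected_in src dst W D -> x \in W -> y \in W -> x != y ->
  exists2 e, e \in D & (src e == x) || (dst e == x).
Proof.
move=> conn xW yW; have /connectP[p xp ->] := conn x y xW yW.
case: p xp => [|z p] /=; first by rewrite eqxx.
case/andP=> /and3P[_ _ /existsP[e /andP[eD ej]]] _ _; exists e => //.
by case/orP: ej => /andP[/eqP-> /eqP->]; rewrite eqxx ?orbT.
Qed.

End MultiGraph.

Lemma homo_connect (T1 T2 : finType) (e1 : rel T1) (e2 : rel T2) (h : T1 -> T2) :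
  (forall x y, e1 x y -> connect e2 (h x) (h y)) ->
  forall x y, connect e1 x y -> connect e2 (h x) (h y).
Proof.
move=> he x y /connectP[p pP ->] {y}; elim: p x pP => [|z p IH] x /=.
  by rewrite connect0.
by case/andP=> /he xz /IH; apply: connect_trans.
Qed.

Section Extension.
Variables (V E : finType) (src dst : E -> V) (F : {set E}) (nbr : 'I_(#|F|).+1 -> V).
Hypothesis nbr_ends :
  forall e, e \in F -> (exists i, nbr i = src e) /\ (exists i, nbr i = dst e).

Local Notation src' := (ext_src src F nbr).
Local Notation dst' := (ext_dst dst F nbr).
Local Notation adjT := (adj_in src dst setT setT).
Local Notation adjT' := (adj_in src' dst' setT (ext_edges F)).

Lemma card_ext_edges : #|ext_edges F| = #|E|.+1.
Proof.
have -> : ext_edges F = ~: (inl @: F).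
  apply/setP => -[e|i]; rewrite !inE; first by rewrite mem_imset //; exact: inl_inj.
  by apply/esym/negP => /imsetP[].
have := cardsC (inl @: F : {set E + 'I_(#|F|).+1}).
rewrite card_imset ?card_sum ?card_ord; last exact: inl_inj.
by rewrite addnS -addSn [_ + #|F|]addnC => /addnI.
Qed.

Lemma adj_ext_nbr i : adjT' None (Some (nbr i)).
Proof. by apply: (adj_in_edge _ _ (_ : inr i \in _)); rewrite ?inE ?joins_ends. Qed.

Lemma connect_ext_adj x y : adjT x y -> connect adjT' (Some x) (Some y).
Proof.
case/and3P=> _ _ /existsP[e /andP[_ exy]].
suff: connect adjT' (Some (src e)) (Some (dst e)).
  case: (joins_inv exy (joins_ends src dst e)) => -[-> ->] //.
  by rewrite connect_adj_in_sym.
have [eF|eF] := boolP (e \in F).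
  have [[i <-] [j <-]] := nbr_ends eF.
  apply: connect_trans (connect1 _) (connect1 (adj_ext_nbr j)).
  by rewrite adj_in_sym adj_ext_nbr.
apply/connect1/(adj_in_edge _ _ (_ : inl e \in _) (joins_ends src' dst' (inl e)));
  by rewrite ?inE.
Qed.

Lemma connected_ext :
  connected_in src dst setT setT -> connected_in src' dst' setT (ext_edges F).
Proof.
move=> conn.
have to_new o : connect adjT' o None.
  case: o => [x|]; last exact: connect0.
  apply: connect_trans (homo_connect connect_ext_adj (conn x (nbr ord0) _ _)) _ => //.
  by apply: connect1; rewrite adj_in_sym adj_ext_nbr.
move=> o o' _ _; apply: connect_trans (to_new o) _.
by rewrite connect_adj_in_sym to_new.
Qed.

Lemma tree_nbr_mem U :
  is_tree src dst U F -> F != set0 -> forall i, nbr i \in U.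
Proof.
move=> treeU /set0Pn[f fF] i; have [Un ends conn _] := treeU.
have cardU : #|F|.+1 = #|U| := ((is_tree_card Un ends).1 treeU).2.
suff /eqP-> : U == [set nbr j | j in 'I_(#|F|).+1] by exact: imset_f.
rewrite eqEcard -cardU -[X in _ <= X]card_ord leq_imset_card andbT.
apply/subsetP => u uU.
have /set0Pn[v /setD1P[vu vU]] : U :\ u != set0.
  rewrite -card_gt0; have := cardsD1 u U; have := cardsD1 f F.
  by rewrite uU fF -cardU /=; lia.
have uv : u != v by rewrite eq_sym.
have [e eF /orP[]/eqP<-] := connected_in_incident conn uU vU uv.
  by have [[j <-] _] := nbr_ends eF; exact: imset_f.
by have [_ [j <-]] := nbr_ends eF; exact: imset_f.
Qed.

Lemma tree_nbr_connect U :
  is_tree src dst U F -> forall i, connect adjT (nbr ord0) (nbr i).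
Proof.
move=> treeU i; have [F0|F_ne] := eqVneq F set0.
  case: i => m lt; have m0 : m = 0 by move: lt; rewrite F0 cards0; case: m.
  by subst m; rewrite (_ : Ordinal lt = ord0) //; exact: val_inj.
have [_ _ conn _] := treeU; have nbrU := tree_nbr_mem treeU F_ne.
by apply: connect_adj_in_sub (conn _ _ (nbrU _) (nbrU _)); exact: subsetT.
Qed.

Hypothesis nbr_connect : forall i, connect adjT (nbr ord0) (nbr i).

Lemma connect_ext_adj_proj o o' :
  adjT' o o' -> connect adjT (odflt (nbr ord0) o) (odflt (nbr ord0) o').
Proof.
case/and3P=> _ _ /existsP[[e|i] /andP[_ eoo']].
  have eT : adjT (src e) (dst e) by apply: (adj_in_edge _ _ _ (joins_ends _ _ e)).
  case: (joins_inv eoo' (joins_ends src' dst' (inl e))) => -[-> ->] /=.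
    exact: connect1.
  by rewrite connect_adj_in_sym; exact: connect1.
case: (joins_inv eoo' (joins_ends src' dst' (inr i))) => -[-> ->] /=.
  exact: nbr_connect.
by rewrite connect_adj_in_sym; exact: nbr_connect.
Qed.

Lemma connected_of_ext :
  connected_in src' dst' setT (ext_edges F) -> connected_in src dst setT setT.
Proof.
move=> conn x y _ _.
exact: (homo_connect connect_ext_adj_proj (conn (Some x) (Some y) _ _)).
Qed.

End Extension.

Theorem lemma3p1 (V E : finType) (src dst : E -> V)
    (HT : simple_graph src dst)
    (U : {set V}) (F : {set E})
    (HS : is_tree src dst U F)
    (nbr : 'I_(#|F|).+1 -> V)
    (Hnbr : forall e, e \in F ->
       (exists i, nbr i = src e) /\ (exists i, nbr i = dst e)) :
  is_tree src dst setT setT <->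
  is_tree (ext_src src F nbr) (ext_dst dst F nbr) setT (ext_edges F).
Proof.
have [/set0Pn[u _] _ _ _] := HS.
have V_ne : [set: V] != set0 by apply/set0Pn; exists u.
have V'_ne : [set: option V] != set0 by apply/set0Pn; exists None.
rewrite is_tree_card // ?is_tree_card //; try by move=> *; rewrite !inE.
rewrite card_ext_edges !cardsT card_option; split=> -[conn card]; split=> //.
- exact: connected_ext.
- by congr _.+1.
- exact: connected_of_ext (tree_nbr_connect Hnbr HS) conn.
- by case: card.
Qed.
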